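(* Let $S=\{s_0,\dots,s_n\}$ be the vertex set of a regular simplex in $\mathbb{R}^n$. There exists $\delta>0$ such that every set $A=\{a_0,\dots,a_n\}\subset\mathbb{R}^n$ with $|a_i-s_i|<\delta$ for all $i$ is Euclidean sub-$p$-toral for every prime $p\ge 2$.
   Context: A $p$-torus is a group isomorphic to $(\mathbb{Z}_p)^\alpha$ for some $\alpha\ge1$. A set $X\subset\mathbb{R}^k$ is Euclidean sub-$p$-toral if there exist $n\ge k$, a $p$-torus $G$ and an action of $G$ on $\mathbb{R}^n$ by isometries such that $X$ (viewed in $\mathbb{R}^n$ via the standard inclusion $\mathbb{R}^k\subset\mathbb{R}^n$) is contained in a single $G$-orbit. *)

From HB Require Import structures.
From mathcomp Require Import all_boot all_order all_algebra.
From mathcomp Require Import reals.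
Set Implicit Arguments. Unset Strict Implicit. Unset Printing Implicit Defensive.
Import Order.TTheory GRing.Theory Num.Theory.
Local Open Scope ring_scope.

Definition enorm (R : realType) (k : nat) (v : 'rV[R]_k) : R :=
  Num.sqrt (\sum_(i < k) v 0 i ^+ 2).

Definition edist (R : realType) (k : nat) (x y : 'rV[R]_k) : R := enorm (x - y).

Definition isometry (R : realType) (k : nat) (f : 'rV[R]_k -> 'rV[R]_k) : Prop :=
  forall x y, edist (f x) (f y) = edist x y.

Definition ptorus (p alpha : nat) := {ffun 'I_alpha -> 'Z_p}.

Definition isometric_action (G : zmodType) (R : realType) (m : nat)
    (act : G -> 'rV[R]_m -> 'rV[R]_m) : Prop :=
  (forall x, act 0 x = x) /\
  (forall g h x, act (g + h) x = act g (act h x)) /\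
  (forall g, isometry (act g)).

Definition incl (R : realType) (k d : nat) (x : 'rV[R]_k) : 'rV[R]_(k + d) :=
  row_mx x 0.

Definition euclidean_sub_p_toral (R : realType) (p k : nat)
    (X : 'rV[R]_k -> Prop) : Prop :=
  exists (d alpha : nat) (act : ptorus p alpha -> 'rV[R]_(k + d) -> 'rV[R]_(k + d)),
    (1 <= alpha)%N /\ isometric_action act /\
    exists x0 : 'rV[R]_(k + d), forall x, X x -> exists g, act g x0 = incl d x.

Definition regular_simplex (R : realType) (n : nat) (s : 'I_n.+1 -> 'rV[R]_n) : Prop :=
  exists L : R, 0 < L /\ forall i j, i != j -> edist (s i) (s j) = L.

From HB Require Import structures.
From mathcomp Require Import all_boot all_order all_algebra.
From mathcomp Require Import reals.
From mathcomp Require Import ring lra.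
From mathcomp Require Import fingroup perm.
Import Order.TTheory GRing.Theory Num.Theory.
Local Open Scope ring_scope.
Set Implicit Arguments. Unset Strict Implicit. Unset Printing Implicit Defensive.

(* If the squared distances D_ij of a_0, ..., a_n are within e of the squared
   edge L2 of a regular simplex, then D is a nonnegative combination of cut
   semimetrics: one cut {k, l} versus the rest for every pair of indices, the
   diagonal pairs {k, k} absorbing the excess.  A cut is realised by Z_p acting
   on a block of p coordinates by cyclic shifts: a point with entry t in one slot
   and its image under a nontrivial shift are at squared distance 2 t^2.  Using
   one block per pair, the points z_i = x0 P(g_i), with g_i the indicator of the
   pairs containing i, lie in one orbit of a p-torus acting by permutation
   matrices and have the same mutual distances as the a_i.  The a_i are affinely
   independent (their Gram matrix is close to L2/2 (J + I)), so the congruence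
   z_i |-> a_i is induced by an orthogonal reflection, which conjugates the
   permutation action into one having all the a_i in a single orbit. *)

Section InnerProduct.
Variable R : realType.

Definition dot k (u v : 'rV[R]_k) : R := \sum_(i < k) u 0 i * v 0 i.
Definition sqnorm k (u : 'rV[R]_k) : R := dot u u.

Lemma dotE k (u v : 'rV[R]_k) : dot u v = (u *m v^T) 0 0.
Proof. by rewrite mxE; apply: eq_bigr => i _; rewrite mxE. Qed.

Lemma dotC k (u v : 'rV[R]_k) : dot u v = dot v u.
Proof. by apply: eq_bigr => i _; rewrite mulrC. Qed.

Lemma dotDl k (u v w : 'rV[R]_k) : dot (u + v) w = dot u w + dot v w.
Proof. by rewrite /dot -big_split; apply: eq_bigr => i _; rewrite mxE mulrDl. Qed.

Lemma dotNl k (u w : 'rV[R]_k) : dot (- u) w = - dot u w.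
Proof. by rewrite /dot -sumrN; apply: eq_bigr => i _; rewrite mxE mulNr. Qed.

Lemma dotZl k a (u w : 'rV[R]_k) : dot (a *: u) w = a * dot u w.
Proof. by rewrite /dot mulr_sumr; apply: eq_bigr => i _; rewrite mxE mulrA. Qed.

Lemma dotBl k (u v w : 'rV[R]_k) : dot (u - v) w = dot u w - dot v w.
Proof. by rewrite dotDl dotNl. Qed.

Lemma dotDr k (u v w : 'rV[R]_k) : dot w (u + v) = dot w u + dot w v.
Proof. by rewrite dotC dotDl !(dotC w). Qed.

Lemma dotBr k (u v w : 'rV[R]_k) : dot w (u - v) = dot w u - dot w v.
Proof. by rewrite dotC dotBl !(dotC w). Qed.

Lemma dotZr k a (u w : 'rV[R]_k) : dot w (a *: u) = a * dot w u.
Proof. by rewrite dotC dotZl dotC. Qed.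

Lemma dot0l k (u : 'rV[R]_k) : dot 0 u = 0.
Proof. by rewrite /dot big1 // => i _; rewrite mxE mul0r. Qed.

Lemma dot_row_mx k1 k2 (a c : 'rV[R]_k1) (b e : 'rV[R]_k2) :
  dot (row_mx a b) (row_mx c e) = dot a c + dot b e.
Proof.
by rewrite /dot big_split_ord /=; congr (_ + _); apply: eq_bigr => i _;
  rewrite ?row_mxEl ?row_mxEr.
Qed.

Lemma dot_mulmx_orth k (Q : 'M[R]_k) (u v : 'rV[R]_k) :
  Q *m Q^T = 1%:M -> dot (u *m Q) (v *m Q) = dot u v.
Proof. by move=> QQ; rewrite !dotE trmx_mul mulmxA -(mulmxA u) QQ mulmx1. Qed.

Lemma sqnorm_ge0 k (u : 'rV[R]_k) : 0 <= sqnorm u.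
Proof. by apply: sumr_ge0 => i _; rewrite -expr2 sqr_ge0. Qed.

Lemma sqnorm_eq0 k (u : 'rV[R]_k) : sqnorm u = 0 -> u = 0.
Proof.
move=> u0; apply/rowP => i; rewrite mxE.
have sq_ge0 j : true -> 0 <= u 0 j * u 0 j by rewrite -expr2 sqr_ge0.
have /eqP := @psumr_eq0P _ _ predT (fun j => u 0 j * u 0 j) sq_ge0 u0 i isT.
by rewrite mulf_eq0 orbb => /eqP.
Qed.

Lemma sqnorm0 k : sqnorm (0 : 'rV[R]_k) = 0.
Proof. exact: dot0l. Qed.

Lemma sqnormN k (u : 'rV[R]_k) : sqnorm (- u) = sqnorm u.
Proof. by rewrite /sqnorm dotNl dotC dotNl opprK. Qed.

Lemma sqnormZ k a (u : 'rV[R]_k) : sqnorm (a *: u) = a ^+ 2 * sqnorm u.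
Proof. by rewrite /sqnorm dotZl dotZr mulrA expr2. Qed.

Lemma sqnormD k (u v : 'rV[R]_k) : sqnorm (u + v) = sqnorm u + 2 * dot u v + sqnorm v.
Proof. by rewrite /sqnorm !dotDl !dotDr (dotC v u); ring. Qed.

Lemma sqnormB k (u v : 'rV[R]_k) : sqnorm (u - v) = sqnorm u - 2 * dot u v + sqnorm v.
Proof. by rewrite /sqnorm !dotBl !dotBr (dotC v u); ring. Qed.

Lemma dot_polar k (x y z : 'rV[R]_k) :
  dot (x - z) (y - z) = (sqnorm (x - z) + sqnorm (y - z) - sqnorm (x - y)) / 2.
Proof.
have -> : x - y = (x - z) - (y - z) by rewrite opprB addrA subrK.
by rewrite (sqnormB (x - z) (y - z)); field.
Qed.

Lemma edist_sqnorm k (x y : 'rV[R]_k) : edist x y = Num.sqrt (sqnorm (x - y)).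
Proof.
by rewrite /edist /enorm; congr Num.sqrt; apply: eq_bigr => i _; rewrite expr2.
Qed.

Lemma sqnorm_incl k d (x : 'rV[R]_k) : sqnorm (incl d x) = sqnorm x.
Proof. by rewrite /sqnorm /incl dot_row_mx dot0l addr0. Qed.

Lemma incl_sub k d (x y : 'rV[R]_k) : incl d x - incl d y = incl d (x - y).
Proof. by rewrite /incl opp_row_mx add_row_mx subr0. Qed.

Lemma dot_incl_eq0 k d (x : 'rV[R]_(k + d)) (y : 'rV[R]_k) :
  (forall b, x 0 (lshift d b) = 0) -> dot x (incl d y) = 0.
Proof.
move=> x0; rewrite /dot big_split_ord /= !big1 ?addr0 // => i _.
  by rewrite /incl row_mxEr mxE mulr0.
by rewrite x0 mul0r.
Qed.

End InnerProduct.

Section Perturbation.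
Variable R : realType.

Lemma norm_dot_le k (u v : 'rV[R]_k) a b : 0 < a -> 0 < b ->
  2 * a * b * `|dot u v| <= a ^+ 2 * sqnorm u + b ^+ 2 * sqnorm v.
Proof.
move=> a0 b0; have ab0 : 0 < a * b by rewrite mulr_gt0.
have := sqnorm_ge0 (a *: u - b *: v); rewrite sqnormB !sqnormZ dotZl dotZr.
have := sqnorm_ge0 (a *: u + b *: v); rewrite sqnormD !sqnormZ dotZl dotZr.
by case: (lerP 0 (dot u v)) => [/ger0_norm|/ltr0_norm] ->; nra.
Qed.

Lemma sqnorm_sub_le k (x y : 'rV[R]_k) : sqnorm (x - y) <= 2 * sqnorm x + 2 * sqnorm y.
Proof. by have := sqnorm_ge0 (x + y); rewrite sqnormD sqnormB; lra. Qed.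

(* With [f := (x - u) - (y - v)], one has [|x - y|^2 - L2 = 2 <u - v, f> + |f|^2];
   the bound on dl makes both terms small, the first one through [norm_dot_le]. *)
Lemma sqnorm_perturb k (x y u v : 'rV[R]_k) (L2 e dl : R) :
  0 < L2 -> 0 < e -> sqnorm (u - v) = L2 -> sqnorm (x - u) <= dl ->
  sqnorm (y - v) <= dl -> dl * 8 * (e + 2 * L2) <= e ^+ 2 ->
  `|sqnorm (x - y) - L2| <= e.
Proof.
move=> L0 e0 huv hx hy hdl; set f := (x - u) - (y - v).
have -> : x - y = (u - v) + f by rewrite /f; apply/rowP => i; rewrite !mxE; ring.
rewrite sqnormD huv.
have hf : sqnorm f <= 4 * dl by have := sqnorm_sub_le (x - u) (y - v); rewrite -/f; lra.
have hf0 := sqnorm_ge0 f.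
have := @norm_dot_le _ (u - v) f e (2 * L2) e0 ltac:(lra).
rewrite huv; set d := dot (u - v) f => hb.
have h1 : 2 * e * `|d| <= e ^+ 2 / 2 + 2 * L2 * sqnorm f.
  rewrite -(@ler_pM2l _ (2 * L2)); last lra.
  have -> : 2 * L2 * (e ^+ 2 / 2 + 2 * L2 * sqnorm f) =
            e ^+ 2 * L2 + (2 * L2) ^+ 2 * sqnorm f by field.
  nra.
have h2 : 2 * `|d| + sqnorm f <= e by rewrite -(ler_pM2l e0); nra.
have -> : L2 + 2 * d + sqnorm f - L2 = 2 * d + sqnorm f by ring.
apply: le_trans h2; apply: (le_trans (ler_normD _ _)).
by rewrite normrM normr_nat (ger0_norm hf0).
Qed.

Lemma sqdist_stable (L2 e : R) : 0 < L2 -> 0 < e ->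
  exists2 delta : R, 0 < delta &
    forall k (x y u v : 'rV[R]_k), sqnorm (u - v) = L2 ->
      edist x u < delta -> edist y v < delta -> `|sqnorm (x - y) - L2| <= e.
Proof.
move=> L0 e0; pose dl := e ^+ 2 / (8 * (e + 2 * L2)).
have dl0 : 0 < dl by rewrite divr_gt0 ?exprn_gt0 // mulr_gt0 //; lra.
have hdl : dl * 8 * (e + 2 * L2) <= e ^+ 2.
  by rewrite /dl -mulrA mulfVK // lt0r_neq0 // mulr_gt0 //; lra.
exists (Num.sqrt dl); first by rewrite sqrtr_gt0.
move=> k x y u v huv hx hy; apply: (sqnorm_perturb L0 e0 huv _ _ hdl).
  by move: hx; rewrite edist_sqnorm ltr_sqrt // => /ltW.
by move: hy; rewrite edist_sqnorm ltr_sqrt // => /ltW.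
Qed.

End Perturbation.

Section Gram.
Variable R : realType.

Definition diff_mx m N (x : 'I_N.+1 -> 'rV[R]_m) : 'M[R]_(N, m) :=
  \matrix_(k, j) (x (lift ord0 k) - x ord0) 0 j.

Definition gram m N (x : 'I_N.+1 -> 'rV[R]_m) : 'M[R]_N := diff_mx x *m (diff_mx x)^T.

Lemma row_diff_mx m N (x : 'I_N.+1 -> 'rV[R]_m) k :
  row k (diff_mx x) = x (lift ord0 k) - x ord0.
Proof. by apply/rowP => j; rewrite !mxE. Qed.

Lemma diff_mx_mul_tr m N (x y : 'I_N.+1 -> 'rV[R]_m) k l :
  (diff_mx x *m (diff_mx y)^T) k l =
  dot (x (lift ord0 k) - x ord0) (y (lift ord0 l) - y ord0).
Proof. by rewrite mxE; apply: eq_bigr => j _; rewrite !mxE. Qed.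

Lemma gramE m N (x : 'I_N.+1 -> 'rV[R]_m) k l :
  gram x k l = (sqnorm (x (lift ord0 k) - x ord0) + sqnorm (x (lift ord0 l) - x ord0)
                - sqnorm (x (lift ord0 k) - x (lift ord0 l))) / 2.
Proof. by rewrite diff_mx_mul_tr dot_polar. Qed.

Lemma gram_eq m1 m2 N (x : 'I_N.+1 -> 'rV[R]_m1) (y : 'I_N.+1 -> 'rV[R]_m2) :
  (forall i j, sqnorm (x i - x j) = sqnorm (y i - y j)) -> gram x = gram y.
Proof. by move=> xy; apply/matrixP => k l; rewrite !gramE !xy. Qed.

Lemma sum_mul_norm_le n (v : 'I_n -> R) :
  \sum_j \sum_k `|v j| * `|v k| <= n%:R * \sum_j v j ^+ 2.
Proof.
have amgm j k : `|v j| * `|v k| <= (v j ^+ 2 + v k ^+ 2) / 2.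
  rewrite -(real_normK (num_real (v j))) -(real_normK (num_real (v k))).
  by have := sqr_ge0 (`|v j| - `|v k|); rewrite sqrrB; lra.
apply: le_trans (ler_sum _ (fun j _ => ler_sum _ (fun k _ => amgm j k))) _.
set S := \sum_j v j ^+ 2.
have inner i : \sum_j (v i ^+ 2 + v j ^+ 2) / 2 = (n%:R * v i ^+ 2 + S) / 2.
  by rewrite -mulr_suml big_split /= sumr_const card_ord mulr_natl.
rewrite (eq_bigr _ (fun i _ => inner i)) -mulr_suml big_split /= sumr_const card_ord.
by rewrite -mulr_sumr -/S mulr_natl; lra.
Qed.

(* The quadratic form of c (J + I) is [c ((sum v)^2 + |v|^2) >= c |v|^2],
   while an entrywise perturbation by at most phi costs at most
   [phi (sum |v_j|)^2 <= phi n |v|^2]. *)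
Lemma perturbed_JI_quad_ge n (G : 'M[R]_n) (c phi : R) (v : 'rV[R]_n) :
  0 <= c -> 0 <= phi -> (forall j k, `|G j k - c * (1 + (j == k)%:R)| <= phi) ->
  (c - phi * n%:R) * sqnorm v <= (v *m G *m v^T) 0 0.
Proof.
move=> c0 phi0 hG.
have -> : (v *m G *m v^T) 0 0 = \sum_k \sum_j v 0 j * G j k * v 0 k.
  rewrite mxE; apply: eq_bigr => k _; rewrite !mxE mulr_suml.
  by apply: eq_bigr => j _; rewrite ?mxE.
have entry_ge j k : c * (1 + (j == k)%:R) * (v 0 j * v 0 k) - phi * (`|v 0 j| * `|v 0 k|)
                    <= v 0 j * G j k * v 0 k.
  set E := G j k - c * (1 + (j == k)%:R).
  have : `|E * (v 0 j * v 0 k)| <= phi * (`|v 0 j| * `|v 0 k|).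
    by rewrite !normrM ler_wpM2r ?mulr_ge0 ?normr_ge0 ?hG.
  have := ler_norm (- (E * (v 0 j * v 0 k))); rewrite normrN.
  have -> : v 0 j * G j k * v 0 k =
            c * (1 + (j == k)%:R) * (v 0 j * v 0 k) + E * (v 0 j * v 0 k) by rewrite /E; ring.
  lra.
apply: le_trans (ler_sum _ (fun k _ => ler_sum _ (fun j _ => entry_ge j k))).
have -> : \sum_(k < n) \sum_(j < n) (c * (1 + (j == k)%:R) * (v 0 j * v 0 k)
                                     - phi * (`|v 0 j| * `|v 0 k|))
        = c * (\sum_j v 0 j) ^+ 2 + c * sqnorm v
          - phi * \sum_k \sum_j `|v 0 j| * `|v 0 k|.
  have -> : (\sum_j v 0 j) ^+ 2 = \sum_(k < n) \sum_(j < n) v 0 j * v 0 k.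
    by rewrite expr2 mulr_suml; apply: eq_bigr => k _; rewrite mulr_sumr;
      apply: eq_bigr => j _; rewrite mulrC.
  have -> : sqnorm v = \sum_(k < n) \sum_(j < n) (j == k)%:R * (v 0 j * v 0 k).
    apply: eq_bigr => k _; rewrite (bigD1 k) //= eqxx mul1r big1 ?addr0 // => j.
    by move/negbTE ->; rewrite mul0r.
  rewrite !mulr_sumr -big_split -sumrB /=; apply: eq_bigr => k _.
  by rewrite !mulr_sumr -big_split -sumrB /=; apply: eq_bigr => j _; ring.
have : \sum_(k < n) \sum_(j < n) `|v 0 j| * `|v 0 k| <= n%:R * sqnorm v.
  have := sum_mul_norm_le (fun j => v 0 j); rewrite exchange_big /=.
  move/le_trans; apply; rewrite /sqnorm /dot le_eqVlt.
  by rewrite -!(eq_bigr _ (fun i _ => expr2 _)) eqxx.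
have := sqr_ge0 (\sum_j v 0 j); nra.
Qed.

Lemma perturbed_JI_unitmx n (G : 'M[R]_n) (c phi : R) :
  0 <= c -> 0 <= phi -> phi * n%:R < c ->
  (forall j k, `|G j k - c * (1 + (j == k)%:R)| <= phi) -> G \in unitmx.
Proof.
move=> c0 phi0 hc hG; rewrite -row_free_unit; apply: inj_row_free => v vG0.
apply: sqnorm_eq0; apply/eqP; rewrite eq_le sqnorm_ge0 andbT.
have := perturbed_JI_quad_ge v c0 phi0 hG.
by rewrite vG0 mul0mx mxE pmulr_rle0 // subr_gt0.
Qed.

Lemma near_regular_gram_unitmx m N (x : 'I_N.+1 -> 'rV[R]_m) (L2 e : R) :
  0 <= e -> 3 * N%:R * e < L2 ->
  (forall i j, i != j -> `|sqnorm (x i - x j) - L2| <= e) -> gram x \in unitmx.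
Proof.
move=> e0 small hx; have N0 : 0 <= N%:R :> R by [].
have L20 : 0 <= L2 by nra.
apply: (@perturbed_JI_unitmx _ _ (L2 / 2) (3 * e / 2)); [lra | lra | nra | ].
have neq0 j : lift ord0 j != ord0 :> 'I_N.+1 by rewrite eq_sym neq_lift.
have bounds i j : i != j -> L2 - e <= sqnorm (x i - x j) <= L2 + e.
  by move=> /hx; rewrite ler_norml => /andP [h1 h2]; apply/andP; split; lra.
move=> j k; rewrite gramE; case: (eqVneq j k) => [<-|njk].
  rewrite subrr sqnorm0 (_ : true%:R = 1 :> R) //.
  case/andP: (bounds _ _ (neq0 j)) => h1 h2; rewrite ler_norml; apply/andP; split; lra.
have njk' : lift ord0 j != lift ord0 k by rewrite (inj_eq lift_inj).
case/andP: (bounds _ _ (neq0 j)) => h1 h2; case/andP: (bounds _ _ (neq0 k)) => h3 h4.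
case/andP: (bounds _ _ njk') => h5 h6.
by rewrite (_ : false%:R = 0 :> R) // addr0 mulr1 ler_norml; apply/andP; split; lra.
Qed.

(* [X := (U - V)^T (U U^T)^-1 (U - V)] satisfies [X X = 2 X], so [1 - X] is a
   symmetric involution; it maps the rows of U to those of V since
   [U (U - V)^T = U U^T]. *)
Lemma reflection_congruence m N (U V : 'M[R]_(N, m)) :
  U *m U^T = V *m V^T -> U *m V^T = 0 -> U *m U^T \in unitmx ->
  exists O : 'M[R]_m, [/\ O *m O^T = 1%:M, O *m O = 1%:M & U *m O = V].
Proof.
move=> UV_gram UV0 Uunit; set G := U *m U^T; set Gi := invmx G; set Dm := U - V.
have GT : G^T = G by rewrite /G trmx_mul trmxK.
have GiT : Gi^T = Gi by rewrite /Gi trmx_inv GT.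
have VU0 : V *m U^T = 0 by rewrite -(trmxK V) -trmx_mul UV0 trmx0.
have UDm : U *m Dm^T = G by rewrite /Dm linearB /= mulmxBr UV0 subr0.
have DDm : Dm *m Dm^T = G + G.
  by rewrite /Dm linearB /= mulmxBl !mulmxBr UV0 VU0 -UV_gram subr0 sub0r opprK.
set X := Dm^T *m Gi *m Dm.
have XT : X^T = X by rewrite /X !trmx_mul trmxK GiT mulmxA.
have XX : X *m X = X + X.
  have -> : X *m X = Dm^T *m Gi *m (Dm *m Dm^T) *m Gi *m Dm by rewrite /X !mulmxA.
  by rewrite DDm mulmxDr !mulmxDl /X -(mulmxA _ Gi G) mulVmx // mulmx1.
exists (1%:M - X); split.
- by rewrite linearB /= trmx1 XT mulmxBl !mulmxBr !mul1mx mulmx1 XX opprB addrK subrK.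
- by rewrite mulmxBl !mulmxBr !mul1mx mulmx1 XX opprB addrK subrK.
- by rewrite mulmxBr mulmx1 /X !mulmxA UDm mulmxV // mul1mx /Dm opprB addrC subrK.
Qed.

End Gram.

Lemma sum_sqr_indicator_sub (R : realType) (T : finType) (x y : T) (t : R) :
  \sum_r ((if r == x then t else 0) - (if r == y then t else 0)) ^+ 2 =
  2 * t ^+ 2 * (x != y)%:R.
Proof.
case: (eqVneq x y) => [<-|nxy] /=.
  by rewrite mulr0 big1 // => r _; rewrite subrr expr0n.
rewrite (bigD1 x) //= (bigD1 y) /=; last by rewrite eq_sym nxy.
rewrite eqxx (negbTE nxy) eq_sym (negbTE nxy) eqxx big1 ?addr0.
  by rewrite sub0r subr0 sqrrN mulr1; ring.
by move=> r /andP [/negbTE -> /negbTE ->]; rewrite subrr expr0n.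
Qed.

Section ShiftAction.
Variables (R : realType) (k p alpha : nat).

(* The extra coordinates of R^(k + blocks) are indexed by pairs (c, r) with
   c : 'I_alpha and r : 'Z_p; g acts on the c-th block by the shift r |-> r + g c. *)
Definition blocks := #|{: 'I_alpha * 'Z_p}|.

Definition shift_coord (g : ptorus p alpha) (x : 'I_alpha * 'Z_p) := (x.1, x.2 + g x.1).

Lemma shift_coordK g : cancel (shift_coord g) (shift_coord (- g)).
Proof. by case=> c r; rewrite /shift_coord /= ffunE addrK. Qed.

Definition shift_index (g : ptorus p alpha) (j : 'I_(k + blocks)) : 'I_(k + blocks) :=
  match split j with
  | inl a => lshift blocks a
  | inr b => rshift k (enum_rank (shift_coord g (enum_val b)))
  end.

Lemma shift_index_l g a : shift_index g (lshift blocks a) = lshift blocks a.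
Proof. by rewrite /shift_index (unsplitK (inl _ a)). Qed.

Lemma shift_index_r g b :
  shift_index g (rshift k b) = rshift k (enum_rank (shift_coord g (enum_val b))).
Proof. by rewrite /shift_index (unsplitK (inr _ b)). Qed.

Lemma shift_indexK g : cancel (shift_index g) (shift_index (- g)).
Proof.
move=> j; case: (split_ordP j) => [a ->|b ->]; first by rewrite !shift_index_l.
by rewrite !shift_index_r enum_rankK shift_coordK enum_valK.
Qed.

Definition shift_perm g : {perm 'I_(k + blocks)} := perm (can_inj (shift_indexK g)).

Lemma shift_perm0 : shift_perm 0 = 1%g.
Proof.
apply/permP => j; rewrite permE perm1; case: (split_ordP j) => [a ->|b ->].
  by rewrite shift_index_l.
by rewrite shift_index_r /shift_coord ffunE addr0 -surjective_pairing enum_valK.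
Qed.

Lemma shift_permD g h : shift_perm (g + h) = (shift_perm g * shift_perm h)%g.
Proof.
apply/permP => j; rewrite permM !permE; case: (split_ordP j) => [a ->|b ->].
  by rewrite !shift_index_l.
by rewrite !shift_index_r enum_rankK /shift_coord /= !ffunE addrA.
Qed.

Definition shift_mx g : 'M[R]_(k + blocks) := perm_mx (shift_perm g)^-1.

Lemma shift_mx_orth g : shift_mx g *m (shift_mx g)^T = 1%:M.
Proof. by rewrite /shift_mx tr_perm_mx -perm_mxM mulgV perm_mx1. Qed.

Lemma shift_mx0 : shift_mx 0 = 1%:M.
Proof. by rewrite /shift_mx shift_perm0 invg1 perm_mx1. Qed.

Lemma shift_mxD g h : shift_mx (g + h) = shift_mx h *m shift_mx g.
Proof. by rewrite /shift_mx shift_permD -perm_mxM invMg. Qed.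

Lemma mul_shift_mxE (z : 'rV[R]_(k + blocks)) g j :
  (z *m shift_mx g) 0 j = z 0 (shift_perm g j).
Proof. by rewrite /shift_mx -col_permE mxE. Qed.

Variable w : 'I_alpha -> R.

(* Entry [sqrt (w c / 2)] in slot (c, 0) of every block, so that moving the
   c-th block contributes exactly [w c] to a squared distance. *)
Definition cut_point : 'rV[R]_(k + blocks) :=
  \row_j match split j with
         | inl _ => 0
         | inr b => if (enum_val b).2 == 0 then Num.sqrt (w (enum_val b).1 / 2) else 0
         end.

Lemma cut_point_shift_l g a : (cut_point *m shift_mx g) 0 (lshift blocks a) = 0.
Proof.
by rewrite mul_shift_mxE permE shift_index_l mxE (unsplitK (inl _ a)).
Qed.

Lemma sqnorm_cut_point_shift g h : (forall c, 0 <= w c) ->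
  sqnorm (cut_point *m shift_mx g - cut_point *m shift_mx h) =
  \sum_c w c * (g c != h c)%:R.
Proof.
move=> w_ge0; rewrite /sqnorm /dot big_split_ord /= big1 ?add0r; last first.
  by move=> a _; rewrite !(cut_point_shift_l, mxE) oppr0 addr0 mul0r.
set H := fun x : 'I_alpha * 'Z_p =>
  ((if x.2 == - g x.1 then Num.sqrt (w x.1 / 2) else 0) -
   (if x.2 == - h x.1 then Num.sqrt (w x.1 / 2) else 0)) ^+ 2.
transitivity (\sum_(i < blocks) H (enum_val i)).
  apply: eq_bigr => b _.
  rewrite !(mul_shift_mxE, mxE) !permE !shift_index_r.
  rewrite !(unsplitK (inr _ _)) !enum_rankK /H /shift_coord /=.
  by rewrite !addr_eq0 expr2.
rewrite -(big_enum_val (A := predT) H).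
transitivity (\sum_c \sum_r H (c, r)); first by rewrite pair_big; apply: eq_bigr => -[].
apply: eq_bigr => c _; rewrite /H /= sum_sqr_indicator_sub sqr_sqrtr ?divr_ge0 //.
by rewrite (inj_eq oppr_inj); field.
Qed.

End ShiftAction.

Section SeparatingPairs.
Variable R : realType.

Lemma sum_mul_neq N (F : 'I_N -> R) j : \sum_l F l * (j != l)%:R = \sum_l F l - F j.
Proof.
rewrite (bigD1 j) //= [in RHS](bigD1 j) //= eqxx mulr0 add0r [F j + _]addrC addrK.
by apply: eq_bigr => l; rewrite eq_sym => ->; rewrite mulr1.
Qed.

Lemma sum_mul_or_eq N (F : 'I_N -> R) i j : i != j ->
  \sum_l F l * ((i == l) || (j == l))%:R = F i + F j.
Proof.
move=> nij; rewrite (bigD1 i) //= (bigD1 j) /=; last by rewrite eq_sym.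
rewrite eqxx (negbTE nij) eq_sym (negbTE nij) eqxx /= !mulr1 big1 ?addr0 //.
by move=> l /andP [nli nlj]; rewrite eq_sym (negbTE nli) eq_sym (negbTE nlj) mulr0.
Qed.

Lemma sum_delta_mul N (F : 'I_N -> R) i : \sum_k (i == k)%:R * F k = F i.
Proof.
rewrite (bigD1 i) //= eqxx mul1r big1 ?addr0 // => k.
by rewrite eq_sym => /negbTE ->; rewrite mul0r.
Qed.

Lemma sum_separating_pairs N (W : 'I_N -> 'I_N -> R) i j :
  (forall k l, W k l = W l k) -> i != j ->
  \sum_k \sum_l W k l * (((i == k) || (i == l)) != ((j == k) || (j == l)))%:R
  = 2 * \sum_l W i l + 2 * \sum_l W j l - 4 * W i j - W i i - W j j.
Proof.
move=> Wsym nij.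
have row_sum k : \sum_l W k l * (((i == k) || (i == l)) != ((j == k) || (j == l)))%:R
   = (W k i + W k j) + (i == k)%:R * (\sum_l W i l - 2 * W i j - W i i)
     + (j == k)%:R * (\sum_l W j l - 2 * W j i - W j j).
  case: (eqVneq i k) => [<-|nik].
    rewrite ?eqxx eq_sym (negbTE nij) /=.
    rewrite (eq_bigr (fun l => W i l * (j != l)%:R)) => [|l _]; last by case: (j == l).
    by rewrite (sum_mul_neq (fun l => W i l)); ring.
  case: (eqVneq j k) => [<-|njk] /=.
    rewrite (eq_bigr (fun l => W j l * (i != l)%:R)) => [|l _]; last by case: (i == l).
    by rewrite (sum_mul_neq (fun l => W j l)) (Wsym j i); ring.
  rewrite (eq_bigr (fun l => W k l * ((i == l) || (j == l))%:R)) => [|l _].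
    by rewrite (sum_mul_or_eq (fun l => W k l)) //; ring.
  by case: (eqVneq i l) => [<-|]; [rewrite (eq_sym j i) (negbTE nij) | case: (j == l)].
rewrite (eq_bigr _ (fun k _ => row_sum k)) !big_split /= !sum_delta_mul.
rewrite (eq_bigr (fun k => W i k)) => [|k _]; last exact: Wsym.
rewrite (eq_bigr (fun k => W j k) (fun k _ => Wsym k j)) (Wsym j i); ring.
Qed.

End SeparatingPairs.

Section PairCuts.
Variables (R : realType) (n p : nat).

Definition npairs := #|{: 'I_n.+1 * 'I_n.+1}|.

Definition pair_weight (W : 'I_n.+1 -> 'I_n.+1 -> R) (c : 'I_npairs) : R :=
  W (enum_val c).1 (enum_val c).2.

Definition pair_cut (i : 'I_n.+1) : ptorus p npairs :=
  [ffun c => ((i == (enum_val c).1) || (i == (enum_val c).2))%:R].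

Lemma npairs_gt0 : (0 < npairs)%N.
Proof. by rewrite /npairs card_prod card_ord muln_gt0. Qed.

Lemma natZp_eq (b1 b2 : bool) : ((b1%:R : 'Z_p) == b2%:R) = (b1 == b2).
Proof. by case: b1; case: b2 => //=; rewrite ?oner_eq0 // eq_sym oner_eq0. Qed.

Lemma sqnorm_pair_cut k (W : 'I_n.+1 -> 'I_n.+1 -> R) (i j : 'I_n.+1) :
  (forall k l, W k l = W l k) -> (forall k l, 0 <= W k l) -> i != j ->
  let z g := cut_point k p (pair_weight W) *m shift_mx R k g in
  sqnorm (z (pair_cut i) - z (pair_cut j)) =
  2 * \sum_l W i l + 2 * \sum_l W j l - 4 * W i j - W i i - W j j.
Proof.
move=> Wsym W_ge0 nij /=; rewrite sqnorm_cut_point_shift => [|c]; last exact: W_ge0.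
rewrite -(sum_separating_pairs Wsym nij) pair_big /=.
rewrite (big_enum_val (A := predT)
  (fun x => W x.1 x.2 * (((i == x.1) || (i == x.2)) != ((j == x.1) || (j == x.2)))%:R)).
by apply: eq_bigr => c _; rewrite !ffunE natZp_eq.
Qed.

End PairCuts.

Section CutWeights.
Variables (R : realType) (n : nat) (D : 'I_n.+1 -> 'I_n.+1 -> R) (c : R).
Hypotheses (D_sym : forall i j, D i j = D j i) (D_diag : forall i, D i i = 0).

(* The diagonal (singleton-cut) weights are tuned so that the pairs separating
   i from j weigh exactly [D i j], whatever c; c only serves positivity. *)
Definition cut_weight (k l : 'I_n.+1) : R :=
  c - D k l / 4 + (k == l)%:R * ((\sum_m D k m) / 2 + (3 - 2 * (n%:R + 1)) * c).

Lemma cut_weightC k l : cut_weight k l = cut_weight l k.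
Proof. by rewrite /cut_weight D_sym; case: (eqVneq k l) => [->|]; rewrite ?mul0r. Qed.

Lemma sum_cut_weight i :
  \sum_l cut_weight i l = (n%:R + 1) * c - (\sum_m D i m) / 4
                          + ((\sum_m D i m) / 2 + (3 - 2 * (n%:R + 1)) * c).
Proof.
rewrite /cut_weight big_split /= sumrB sumr_const card_ord -mulr_suml.
by rewrite sum_delta_mul -[c *+ _]mulr_natl -natr1.
Qed.

Lemma cut_weight_sep i j : i != j ->
  2 * \sum_l cut_weight i l + 2 * \sum_l cut_weight j l - 4 * cut_weight i j
  - cut_weight i i - cut_weight j j = D i j.
Proof.
move=> nij; rewrite !sum_cut_weight /cut_weight !eqxx (negbTE nij) !D_diag.
by rewrite (_ : true%:R = 1 :> R) // (_ : false%:R = 0 :> R) //; field.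
Qed.

End CutWeights.

Lemma cut_weight_ge0 (R : realType) n (D : 'I_n.+1 -> 'I_n.+1 -> R) (L2 e : R) :
  (forall i, D i i = 0) -> (forall i j, i != j -> `|D i j - L2| <= e) ->
  2 * n%:R * e <= L2 + e -> forall k l, 0 <= cut_weight D ((L2 + e) / 4) k l.
Proof.
move=> D_diag hD small k l.
have bounds i j : i != j -> L2 - e <= D i j <= L2 + e.
  by move=> /hD; rewrite ler_norml => /andP [h1 h2]; apply/andP; split; lra.
rewrite /cut_weight; case: (eqVneq k l) => [<-|nkl]; last first.
  by case/andP: (bounds _ _ nkl) => _ h; rewrite mul0r addr0; lra.
have : \sum_m (L2 - e) * (k != m)%:R <= \sum_m D k m.
  apply: ler_sum => m _; case: (eqVneq k m) => [<-|nkm]; first by rewrite mulr0 D_diag.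
  by rewrite mulr1; case/andP: (bounds _ _ nkm).
rewrite sum_mul_neq sumr_const card_ord mulrSr addrK -mulr_natl D_diag.
by rewrite (_ : true%:R = 1 :> R) // mul1r; lra.
Qed.

Lemma isometric_action_conj (G : zmodType) (R : realType) m
    (P : G -> 'M[R]_m) (O : 'M[R]_m) (c : 'rV[R]_m) :
  P 0 = 1%:M -> (forall g h, P (g + h) = P h *m P g) ->
  (forall g, P g *m (P g)^T = 1%:M) -> O *m O^T = 1%:M -> O *m O = 1%:M ->
  isometric_action (fun g x => (x - c) *m (O *m P g *m O) + c).
Proof.
move=> P0 PD Porth OOT OO.
have addrK2 (u v w : 'rV[R]_m) : (u + w) - (v + w) = u - v.
  by rewrite opprD addrACA subrr addr0.
split; [|split].
- by move=> x; rewrite P0 mulmx1 OO mulmx1 subrK.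
- move=> g h x; rewrite addrK -(mulmxA (x - c)); congr (_ *m _ + c).
  by rewrite PD !mulmxA -(mulmxA (O *m P h) O O) OO mulmx1.
- move=> g x y; rewrite !edist_sqnorm addrK2 -mulmxBl addrK2; congr Num.sqrt.
  have orth_mul (A B : 'M[R]_m) :
      A *m A^T = 1%:M -> B *m B^T = 1%:M -> (A *m B) *m (A *m B)^T = 1%:M.
    by move=> AA BB; rewrite trmx_mul mulmxA -(mulmxA A B) BB mulmx1 AA.
  by rewrite /sqnorm dot_mulmx_orth // !orth_mul.
Qed.

(* The z_i = x0 P(g_i) live in the last d coordinates, orthogonally to the
   embedded a_i; the reflection given by [reflection_congruence] maps the z_i
   onto the a_i up to translation and conjugates P accordingly. *)
Lemma sub_p_toral_of_orbit (R : realType) (p k d alpha N : nat)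
    (P : ptorus p alpha -> 'M[R]_(k + d)) (g : 'I_N.+1 -> ptorus p alpha)
    (x0 : 'rV[R]_(k + d)) (a : 'I_N.+1 -> 'rV[R]_k) :
  (0 < alpha)%N -> P 0 = 1%:M -> (forall g h, P (g + h) = P h *m P g) ->
  (forall g, P g *m (P g)^T = 1%:M) ->
  (forall i b, (x0 *m P (g i)) 0 (lshift d b) = 0) ->
  (forall i j, sqnorm (x0 *m P (g i) - x0 *m P (g j)) = sqnorm (a i - a j)) ->
  gram a \in unitmx ->
  euclidean_sub_p_toral p (fun x => exists i, x = a i).
Proof.
move=> alpha_gt0 P0 PD Porth z_l za a_unit.
pose z i := x0 *m P (g i); pose y i := incl d (a i).
have zy i j : sqnorm (z i - z j) = sqnorm (y i - y j) by rewrite /y incl_sub sqnorm_incl za.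
have zy_orth : diff_mx z *m (diff_mx y)^T = 0.
  apply/matrixP => i j; rewrite diff_mx_mul_tr mxE /y incl_sub.
  by apply: dot_incl_eq0 => b; rewrite /z !(z_l, mxE) oppr0 addr0.
have z_unit : gram z \in unitmx by rewrite (gram_eq za).
have [O [OOT OO zO]] := reflection_congruence (gram_eq zy) zy_orth z_unit.
pose c := y ord0 - z ord0 *m O.
exists d, alpha, (fun g x => (x - c) *m (O *m P g *m O) + c); split=> //; split.
  exact: isometric_action_conj.
exists (x0 *m O + c) => _ [i ->]; exists (g i).
rewrite addrK !mulmxA -(mulmxA _ O O) OO mulmx1 -/(z i).
case: (unliftP ord0 i) => [l ->|->]; last by rewrite subrKC.
rewrite -[z (lift ord0 l)](subrK (z ord0)) mulmxDl -row_diff_mx -row_mul zO.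
by rewrite row_diff_mx -addrA subrKC subrK.
Qed.

Lemma near_regular_sub_p_toral (R : realType) p k N (a : 'I_N.+1 -> 'rV[R]_k) (L2 e : R) :
  0 < e -> e * (4 * (N%:R + 1)) <= L2 ->
  (forall i j, i != j -> `|sqnorm (a i - a j) - L2| <= e) ->
  euclidean_sub_p_toral p (fun x => exists i, x = a i).
Proof.
move=> e0 small a_near; have N_ge0 : 0 <= N%:R :> R by [].
pose D i j := sqnorm (a i - a j).
have D_diag i : D i i = 0 by rewrite /D subrr sqnorm0.
have D_sym i j : D i j = D j i by rewrite /D -opprB sqnormN.
pose W := cut_weight D ((L2 + e) / 4).
apply: (sub_p_toral_of_orbit (P := @shift_mx R k p (npairs N)) (g := pair_cut p)
          (x0 := cut_point k p (pair_weight W))).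
- exact: npairs_gt0.
- exact: shift_mx0.
- exact: shift_mxD.
- exact: shift_mx_orth.
- by move=> i b; apply: cut_point_shift_l.
- move=> i j; case: (eqVneq i j) => [<-|nij]; first by rewrite !subrr !sqnorm0.
  rewrite sqnorm_pair_cut ?cut_weight_sep // => k' l; first exact: cut_weightC.
  by apply: (cut_weight_ge0 D_diag a_near); nra.
- by apply: (near_regular_gram_unitmx (ltW e0) _ a_near); nra.
Qed.

Unset Implicit Arguments.

Theorem lemma7 (R : realType) (n : nat) (s : 'I_n.+1 -> 'rV[R]_n) :
  regular_simplex s ->
  exists delta : R, 0 < delta /\
    forall a : 'I_n.+1 -> 'rV[R]_n,
      (forall i, edist (a i) (s i) < delta) ->
      forall p : nat, prime p ->
        euclidean_sub_p_toral p (fun x => exists i, x = a i).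
Proof.
case=> L [L0 hL]; set L2 := L ^+ 2.
have L20 : 0 < L2 by rewrite exprn_gt0.
have s_sqdist i j : i != j -> sqnorm (s i - s j) = L2.
  by move=> /hL; rewrite edist_sqnorm => sL; rewrite -[LHS]sqr_sqrtr ?sqnorm_ge0 // sL.
have n1_gt0 : 0 < 4 * (n%:R + 1) :> R by rewrite mulr_gt0 // ltr_wpDl.
pose e := L2 / (4 * (n%:R + 1)).
have e0 : 0 < e by rewrite divr_gt0.
have [delta delta0 stable] := sqdist_stable L20 e0.
exists delta; split=> // a a_near p _.
apply: (@near_regular_sub_p_toral R p n n a L2 e e0); first by rewrite mulfVK ?lt0r_neq0.
by move=> i j nij; apply: stable (s_sqdist i j nij) (a_near i) (a_near j).
Qed.
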